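(* For every many-to-many matching game with additive externalities $G$, the optimistic, neutral, and pessimistic stable sets satisfy $\mathcal{O}\text{-set}(G)\subseteq\mathcal{N}\text{-set}(G)\subseteq\mathcal{P}\text{-set}(G)$.
   Context: Agents: $N=M\cup W$ with $M,W$ disjoint finite sets. A match is a pair $(m,w)$ with $m\in M$, $w\in W$; a (many-to-many) matching is any set of matches. Forming a match requires consent of both endpoints; severing can be done unilaterally by either endpoint. A game is $G=(M,W,\Pi)$ where $\Pi(m,w\mid z)\in\mathbb{R}$ is the value agent $z$ receives from the formation of match $(m,w)$; utility is $u(z,\mathcal{A})=\sum_{(m,w)\in\mathcal{A}}\Pi(m,w\mid z)$. A coalition $B\subseteq N$ blocks $\mathcal{A}$ if, by rearranging matches among its members and deleting a (possibly empty) subset of its members' matches with agents in $N\setminus B$, with every member of $B$ performing at least one action, it makes at least one member strictly better off and no member worse off, where the deviators' utilities after deviation are evaluated according to an assumed reaction of $N\setminus B$: neutral (no reaction: matches among non-deviators remain, none form); optimistic (each $i\in B$ assumes $N\setminus B$ organize in the best possible way for $i$, cutting matches with negative influence on $i$ and forming all matches with positive influence on $i$, including ones with $i$ as endpoint); pessimistic (each deviator assumes $N\setminus B$ punish it maximally, cutting matches with positive influence on it and forming matches with negative influence on it). $\mathcal{O}\text{-set}(G)$, $\mathcal{N}\text{-set}(G)$, $\mathcal{P}\text{-set}(G)$ denote the sets of matchings admitting no blocking coalition under optimistic, neutral, and pessimistic reasoning respectively. *)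

From HB Require Import structures.
From mathcomp Require Import all_boot all_order all_algebra.
Set Implicit Arguments. Unset Strict Implicit. Unset Printing Implicit Defensive.
Import Order.TTheory GRing.Theory Num.Theory.
Local Open Scope ring_scope.

(* A game is Pi : M -> W -> agent -> R, Pi m w z = value to z of match (m,w). *)

Definition agent (M W : finType) : finType := (M + W)%type.

Definition game (R : realFieldType) (M W : finType) := M -> W -> agent M W -> R.

Section Matching.
Variables (R : realFieldType) (M W : finType).
Implicit Types (G : game R M W) (A : {set M * W}) (B : {set agent M W}).

Definition util G (z : agent M W) A : R := \sum_(e in A) G e.1 e.2 z.

Definition endp1 (e : M * W) : agent M W := inl e.1.
Definition endp2 (e : M * W) : agent M W := inr e.2.
Definition is_endpoint (i : agent M W) (e : M * W) : bool :=
  (i == endp1 e) || (i == endp2 e).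

(* A' results from A by a deviation of coalition B:
   - matches among non-members of B are unchanged;
   - matches between a member and a non-member can only be deleted;
   - matches among members of B are arbitrarily rearranged;
   - every member of B performs at least one action (is an endpoint of a
     match that is formed or deleted). *)
Definition is_deviation B A A' : bool :=
  [forall e : M * W,
     ((endp1 e \notin B) && (endp2 e \notin B) ==> ((e \in A') == (e \in A)))
  && (((endp1 e \in B) (+) (endp2 e \in B)) ==> ((e \in A') ==> (e \in A)))]
  && [forall i in B, exists e : M * W,
        ((e \in A) != (e \in A')) && is_endpoint i e].

Inductive attitude := Optimistic | Neutral | Pessimistic.

(* matches the non-deviators can act on in the optimistic reaction assumed by
   deviator i: matches with both endpoints in (N \ B) u {i} *)
Definition opt_scope B (i : agent M W) : {set M * W} :=
  [set e : M * W | (endp1 e \in (~: B) :|: [set i]) &&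
                   (endp2 e \in (~: B) :|: [set i])].

Definition pes_scope B : {set M * W} :=
  [set e : M * W | (endp1 e \notin B) && (endp2 e \notin B)].

(* matching evaluated by deviator i after the assumed reaction of N \ B *)
Definition reaction (att : attitude) G B (i : agent M W) A' : {set M * W} :=
  match att with
  | Neutral => A'
  | Optimistic =>
      (A' :\: [set e in opt_scope B i | G e.1 e.2 i < 0])
        :|: [set e in opt_scope B i | 0 < G e.1 e.2 i]
  | Pessimistic =>
      (A' :\: [set e in pes_scope B | 0 < G e.1 e.2 i])
        :|: [set e in pes_scope B | G e.1 e.2 i < 0]
  end.

Definition blocks (att : attitude) G A B : Prop :=
  exists A' : {set M * W},
    is_deviation B A A' /\
    (forall i, i \in B -> util G i A <= util G i (reaction att G B i A')) /\
    (exists2 i, i \in B & util G i A < util G i (reaction att G B i A')).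

Definition in_stable_set (att : attitude) G A : Prop :=
  forall B : {set agent M W}, ~ blocks att G A B.

End Matching.

From mathcomp Require Import all_boot all_order all_algebra.
Import Order.TTheory GRing.Theory Num.Theory.
Local Open Scope ring_scope.

(* Every attitude evaluates a deviation by additively modifying the deviated
   matching: the optimist drops harmful and adds beneficial matches, the
   pessimist does the reverse. So for each deviator the optimistic payoff
   dominates the neutral one, which dominates the pessimistic one; a deviation
   that blocks under a gloomier attitude therefore blocks under a sunnier one. *)

Lemma sum_le_dropN_addP (T : finType) (R : realDomainType) (f : T -> R)
    (A S : {set T}) :
  \sum_(e in A) f e <=
  \sum_(e in (A :\: [set e in S | f e < 0]) :|: [set e in S | 0 < f e]) f e.
Proof.
rewrite [X in X <= _]big_mkcond [X in _ <= X]big_mkcond /=.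
apply: ler_sum => e _; rewrite !inE.
by case: (e \in A) (e \in S) (ltrgtP (f e) 0) => [] [] [] //= fe;
  rewrite ?lexx ?ltW.
Qed.

Section Reactions.
Variables (R : realFieldType) (M W : finType) (G : game R M W).
Variables (B : {set agent M W}) (i : agent M W) (A' : {set M * W}).

Lemma util_le_optimistic : util G i A' <= util G i (reaction Optimistic G B i A').
Proof. exact: sum_le_dropN_addP. Qed.

Lemma util_pessimistic_le : util G i (reaction Pessimistic G B i A') <= util G i A'.
Proof.
(* The pessimist's modification is the optimist's one for the payoff -G. *)
rewrite -lerN2 /util -!sumrN.
have /= := @sum_le_dropN_addP _ _ (fun e => - G e.1 e.2 i) A' (pes_scope B).
have -> : [set e in pes_scope B | - G e.1 e.2 i < 0] = [set e in pes_scope B | 0 < G e.1 e.2 i].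
  by apply/setP => e; rewrite !inE oppr_lt0.
have -> : [set e in pes_scope B | 0 < - G e.1 e.2 i] = [set e in pes_scope B | G e.1 e.2 i < 0].
  by apply/setP => e; rewrite !inE oppr_gt0.
by [].
Qed.

End Reactions.

Section Monotonicity.
Variables (R : realFieldType) (M W : finType) (G : game R M W).

Lemma blocks_le_reaction (att att' : attitude) A B :
  (forall i A', util G i (reaction att G B i A') <= util G i (reaction att' G B i A')) ->
  blocks att G A B -> blocks att' G A B.
Proof.
move=> le_att [A' [devA' [weak [i Bi strict]]]]; exists A'; split=> //; split.
- by move=> j Bj; apply: le_trans (weak j Bj) (le_att j A').
- by exists i => //; apply: lt_le_trans strict (le_att i A').
Qed.

Lemma in_stable_set_le_reaction (att att' : attitude) A :
  (forall B i A', util G i (reaction att G B i A') <= util G i (reaction att' G B i A')) ->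
  in_stable_set att' G A -> in_stable_set att G A.
Proof.
by move=> le_att stableA B /(blocks_le_reaction _ _ _ _ (le_att B)); apply: stableA.
Qed.

End Monotonicity.

Theorem theorem9 (R : realFieldType) (M W : finType) (G : game R M W) :
  (forall A : {set M * W},
      in_stable_set Optimistic G A -> in_stable_set Neutral G A) /\
  (forall A : {set M * W},
      in_stable_set Neutral G A -> in_stable_set Pessimistic G A).
Proof.
split=> A; apply: in_stable_set_le_reaction => B i A'.
- exact: util_le_optimistic.
- exact: util_pessimistic_le.
Qed.
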